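(* For all integers $n\geq0$, \[ \sum_{j=0}^n\binom{2j}{j}\binom{2(n-j)}{n-j}O_jO_{n-j}=4^{n-1}\sum_{j=1}^n\frac{H_{n-j}}{j}. \]
   Context: $H_n=\sum_{j=1}^n\frac1j$ ($H_0=0$) and $O_n=\sum_{j=1}^n\frac1{2j-1}$ ($O_0=0$). An empty sum is $0$. *)

From mathcomp Require Import all_boot all_order all_algebra.
Set Implicit Arguments. Unset Strict Implicit. Unset Printing Implicit Defensive.
Import Order.TTheory GRing.Theory Num.Theory.
Local Open Scope ring_scope.

Definition H (n : nat) : rat := \sum_(1 <= j < n.+1) (j%:R)^-1.

Definition O (n : nat) : rat := \sum_(1 <= j < n.+1) ((2 * j - 1)%N%:R)^-1.

(* Let B(x) = sum_j C(2j,j) x^j = (1-4x)^(-1/2) and L(x) = -log(1-4x) = sum_k 4^k x^k / k.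
   Then B^2 = 1/(1-4x), and B L = 2 sum_j C(2j,j) O_j x^j because both sides solve
   (1-4x) y' = 2 y + 4 B with y(0) = 0.  So the left-hand side is the n-th coefficient of
   (B L)^2 / 4 = B^2 L^2 / 4, and rescaling x to x/4 turns B^2 L^2 into
   log(1-x)^2 / (1-x), whose n-th coefficient is sum_j H_(n-j) / j. *)

From mathcomp Require Import all_boot all_order all_algebra.
From mathcomp Require Import zify ring.
Set Implicit Arguments.
Unset Strict Implicit.
Unset Printing Implicit Defensive.
Import GRing.Theory Num.Theory.
Local Open Scope ring_scope.

Definition conv {R : nzSemiRingType} (f g : nat -> R) (n : nat) : R :=
  \sum_(i < n.+1) f i * g (n - i)%N.

Section Convolution.

Variable R : comNzSemiRingType.
Implicit Types (f g h k : nat -> R) (x : R).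

Lemma eq_conv f f' g g' n :
    (forall i, (i <= n)%N -> f i = f' i) -> (forall i, (i <= n)%N -> g i = g' i) ->
  conv f g n = conv f' g' n.
Proof.
move=> ef eg; apply: eq_bigr => i _.
by rewrite ef ?eg ?leq_subr // -ltnS.
Qed.

Lemma convS f g n : conv f g n.+1 = f 0%N * g n.+1 + conv (fun i => f i.+1) g n.
Proof. by rewrite /conv big_ord_recl. Qed.

Lemma convC f g n : conv f g n = conv g f n.
Proof.
rewrite /conv (reindex_inj rev_ord_inj); apply: eq_bigr => i _ /=.
by rewrite subSS subKn ?leq_ord // mulrC.
Qed.

Lemma convDl f g h n :
  conv (fun i => f i + g i) h n = conv f h n + conv g h n.
Proof. by rewrite /conv -big_split; apply: eq_bigr => i _; rewrite mulrDl. Qed.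

Lemma conv_mull x f g n : conv (fun i => x * f i) g n = x * conv f g n.
Proof. by rewrite /conv big_distrr; apply: eq_bigr => i _ /=; rewrite mulrA. Qed.

Lemma conv_mulr x f g n : conv f (fun i => x * g i) n = x * conv f g n.
Proof. by rewrite convC conv_mull convC. Qed.

Lemma conv_exp x f g n :
  conv (fun i => x ^+ i * f i) (fun i => x ^+ i * g i) n = x ^+ n * conv f g n.
Proof.
rewrite /conv big_distrr; apply: eq_bigr => i _.
by rewrite mulrACA -exprD subnKC ?leq_ord.
Qed.

Lemma conv_leibniz f g n :
  n%:R * conv f g n
  = conv (fun i => i%:R * f i) g n + conv f (fun i => i%:R * g i) n.
Proof.
rewrite /conv big_distrr -big_split; apply: eq_bigr => i _ /=.
have -> : n%:R = i%:R + (n - i)%:R :> R by rewrite -natrD subnKC // -ltnS.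
by rewrite mulrDl mulrA mulrCA.
Qed.

Lemma convA f g h n : conv (conv f g) h n = conv f (conv g h) n.
Proof.
(* Up to degree n, convolution is the multiplication of truncated polynomials. *)
pose P u := \poly_(i < n.+1) u i : {poly R}.
have coefP u i : (i <= n)%N -> (P u)`_i = u i by rewrite coef_poly ltnS => ->.
have convP u v i : (i <= n)%N -> conv u v i = (P u * P v)`_i.
  move=> le_in; rewrite coefM; apply: eq_conv => j le_ji;
    by rewrite coefP // (leq_trans le_ji le_in).
transitivity ((P f * P g * P h)`_n); last rewrite -mulrA.
all: by rewrite coefM; apply: eq_conv => i le_in; rewrite ?coefP ?convP ?leq_subr.
Qed.

Lemma convACA f g h k n :
  conv (conv f g) (conv h k) n = conv (conv f h) (conv g k) n.
Proof.
rewrite !convA; apply: eq_conv => // i _.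
by rewrite -!convA; apply: eq_conv => // j _; apply: convC.
Qed.

Lemma conv_leibniz_diag f n :
  n%:R * conv f f n = 2 * conv (fun i => i%:R * f i) f n.
Proof. by rewrite conv_leibniz [conv f _ n]convC; ring. Qed.

End Convolution.

Definition central_binom {R : nzSemiRingType} (i : nat) : R := 'C(2 * i, i)%:R.

Lemma mul_bin_centerS j :
  (j.+1 * 'C(2 * j.+1, j.+1) = 2 * (2 * j).+1 * 'C(2 * j, j))%N.
Proof.
have pred_double : (2 * j.+1).-1 = (2 * j).+1 by rewrite mulnS.
have sub_double : ((2 * j).+1 - j = j.+1)%N by lia.
by rewrite -mul_bin_diag pred_double -!mulnA mul_bin_down sub_double.
Qed.

Lemma mulrn_central_binomS (R : comNzSemiRingType) j :
  j.+1%:R * central_binom j.+1 = 4 * (j%:R * central_binom j) + 2 * central_binom j :> R.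
Proof.
rewrite /central_binom -natrM mul_bin_centerS -[(2 * j).+1]addn1 !(natrM, natrD).
ring.
Qed.

Lemma conv_central_binom (R : numDomainType) n :
  conv central_binom central_binom n = 4 ^+ n :> R.
Proof.
elim: n => [|n IH]; first by rewrite /conv big_ord1 /central_binom bin0 mulr1.
apply: (mulfI (x := n.+1%:R)); first by rewrite pnatr_eq0.
rewrite conv_leibniz_diag convS /= !mul0r add0r.
under eq_conv => [i _|i _] do [rewrite mulrn_central_binomS|].
rewrite convDl !conv_mull mulrDr mulrCA -conv_leibniz_diag IH exprS -natr1.
ring.
Qed.

(* The coefficients of -log(1-4x); the junk value 0^-1 = 0 gives the right constant term. *)
Definition log_coef (k : nat) : rat := 4 ^+ k / k%:R.

Lemma log_coef0 : log_coef 0 = 0.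
Proof. by rewrite /log_coef invr0 mulr0. Qed.

Lemma mulrn_log_coefS k : k.+1%:R * log_coef k.+1 = 4 ^+ k.+1.
Proof. by rewrite /log_coef mulrC divfK // pnatr_eq0. Qed.

Lemma conv_mulrn_log_coefS (f : nat -> rat) n :
  conv (fun i => i.+1%:R * log_coef i.+1) f n
  = 4 * (conv (fun i => i%:R * log_coef i) f n + f n).
Proof.
under eq_conv => [i _|i _] do [rewrite mulrn_log_coefS exprS|].
rewrite conv_mull /conv !big_ord_recl /= subn0 mul0r add0r mul1r addrC.
by congr (_ * (_ + _)); apply: eq_bigr => i _; rewrite /bump /= add1n mulrn_log_coefS.
Qed.

(* The coefficients of (1-4x) (B L)' = 2 B L + 4 B. *)
Lemma conv_central_binom_log_rec n :
  n.+1%:R * conv central_binom log_coef n.+1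
  = (4 * n%:R + 2) * conv central_binom log_coef n + 4 * central_binom n.
Proof.
rewrite conv_leibniz convS /= !mul0r add0r.
under eq_conv => [i _|i _] do [rewrite mulrn_central_binomS|].
rewrite convDl !conv_mull [conv central_binom _ n.+1]convC convS /= !mul0r add0r.
have := conv_leibniz central_binom log_coef n.
rewrite (convC central_binom (fun i => i%:R * log_coef i)) => leib.
by rewrite conv_mulrn_log_coefS [(_ + 2) * _]mulrDl -[4 * _ * _]mulrA leib; ring.
Qed.

Lemma OS n : O n.+1 = O n + (2 * n%:R + 1)^-1.
Proof.
rewrite /O big_nat_recr //=; congr (_ + (_)^-1).
by rewrite mulnS add2n /= subSS subn0 -addn1 natrD natrM.
Qed.

Lemma conv_central_binom_log n :
  conv central_binom log_coef n = 2 * central_binom n * O n.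
Proof.
elim: n => [|n IH]; first by rewrite /conv big_ord1 log_coef0 /O big_geq // !mulr0.
apply: (mulfI (x := n.+1%:R)); first by rewrite pnatr_eq0.
have odd_neq0 : 2 * n%:R + 1 != 0 :> rat by rewrite -natrM natr1 pnatr_eq0.
rewrite conv_central_binom_log_rec IH OS [RHS]mulrA [n.+1%:R * _]mulrCA.
by rewrite mulrn_central_binomS; field.
Qed.

Lemma conv_invn (F : fieldType) (f : nat -> F) n :
  conv (fun i => i%:R^-1) f n = \sum_(1 <= j < n.+1) f (n - j)%N / j%:R.
Proof.
rewrite /conv big_ord_recl invr0 mul0r add0r big_add1 big_mkord /=.
by apply: eq_bigr => i _; rewrite mulrC.
Qed.

Lemma H_conv n : H n = conv (fun i => i%:R^-1) (fun=> 1) n.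
Proof. by rewrite conv_invn; apply: eq_bigr => j _; rewrite div1r. Qed.

Theorem corollary4 (n : nat) :
  \sum_(0 <= j < n.+1)
      ('C(2 * j, j)%:R * 'C(2 * (n - j), n - j)%:R * O j * O (n - j) : rat)
  = (4 : rat) ^ (n%:Z - 1) * \sum_(1 <= j < n.+1) H (n - j) / j%:R.
Proof.
pose c := conv central_binom log_coef; pose inv (i : nat) : rat := i%:R^-1.
have half_c i : central_binom i * O i = 2^-1 * c i.
  by rewrite /c conv_central_binom_log; field.
have conv_log m : conv log_coef log_coef m = 4 ^+ m * conv inv inv m.
  exact: conv_exp.
transitivity (conv (fun i => 2^-1 * c i) (fun i => 2^-1 * c i) n).
  rewrite big_mkord; apply: eq_bigr => j _; rewrite -!half_c /central_binom; ring.
rewrite conv_mull conv_mulr convACA.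
under eq_conv => [i _|i _] do [rewrite conv_central_binom -[4 ^+ i]mulr1|rewrite conv_log].
rewrite conv_exp convC convA.
under eq_conv => [i _|i _] do [|rewrite -H_conv].
by rewrite conv_invn expfzDr // exprN1 -exprnP; field.
Qed.
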